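(* Let $E$ be a dark minimal ceer, and let $R$ be an arbitrary equivalence relation on $\omega$ such that $R$ has infinitely many equivalence classes and $R\supseteq E$. Then $R$ is minimal.
   Context: All equivalence relations have domain $\omega$. For equivalence relations $R,S$, $R\leq_c S$ means there is a computable function $f$ with $xRy\Leftrightarrow f(x)Sf(y)$ for all $x,y$; $R\equiv_c S$ means $R\leq_c S$ and $S\leq_c R$. $\mathrm{Id}$ is the identity relation on $\omega$, and for $n\geq1$, $\mathrm{Id}_n$ is the relation $x\,\mathrm{Id}_n\,y\Leftrightarrow n\mid(x-y)$. A ceer is a computably enumerable equivalence relation. A ceer is dark if it is $\leq_c$-incomparable with $\mathrm{Id}$. An equivalence relation $R$ is minimal if it has infinitely many classes and for every equivalence relation $S$, $S\leq_c R$ implies $S\equiv_c R$ or $S\equiv_c\mathrm{Id}_n$ for some $n$. *)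

(* Computability is modelled by (arity-free) mu-recursive
   function codes with a big-step partial evaluation relation. *)
From Stdlib Require Import List Arith.
Import ListNotations.

Inductive code : Type :=
| CZero : code
| CSucc : code
| CProj : nat -> code
| CComp : code -> list code -> code
| CPrim : code -> code -> code
| CMu   : code -> code.

Inductive eval : code -> list nat -> nat -> Prop :=
| ev_zero : forall v, eval CZero v 0
| ev_succ : forall v, eval CSucc v (S (hd 0 v))
| ev_proj : forall i v, eval (CProj i) v (nth i v 0)
| ev_comp : forall f gs v ws y,
    evals gs v ws -> eval f ws y -> eval (CComp f gs) v y
| ev_prim0 : forall f g v y, eval f v y -> eval (CPrim f g) (0 :: v) y
| ev_primS : forall f g n v z y,
    eval (CPrim f g) (n :: v) z -> eval g (n :: z :: v) y ->
    eval (CPrim f g) (S n :: v) y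
| ev_mu : forall f v n,
    eval f (n :: v) 0 ->
    (forall m, m < n -> exists k, eval f (m :: v) (S k)) ->
    eval (CMu f) v n
with evals : list code -> list nat -> list nat -> Prop :=
| evs_nil : forall v, evals [] v []
| evs_cons : forall g gs v w ws,
    eval g v w -> evals gs v ws -> evals (g :: gs) v (w :: ws).

Definition computable (f : nat -> nat) : Prop :=
  exists c, forall x, eval c [x] (f x).

Definition ce_rel (P : nat -> nat -> Prop) : Prop :=
  exists c, forall x y, P x y <-> exists z, eval c [x; y] z.

Definition equiv_rel (R : nat -> nat -> Prop) : Prop :=
  (forall x, R x x) /\ (forall x y, R x y -> R y x) /\
  (forall x y z, R x y -> R y z -> R x z).

Definition ceer (R : nat -> nat -> Prop) : Prop := equiv_rel R /\ ce_rel R.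

Definition creduces (R S : nat -> nat -> Prop) : Prop :=
  exists f, computable f /\ forall x y, R x y <-> S (f x) (f y).

Definition cequiv (R S : nat -> nat -> Prop) : Prop :=
  creduces R S /\ creduces S R.

Definition Id : nat -> nat -> Prop := fun x y => x = y.

Definition Idn (n : nat) : nat -> nat -> Prop :=
  fun x y => x mod n = y mod n.

Definition inf_classes (R : nat -> nat -> Prop) : Prop :=
  forall n, exists f : nat -> nat,
    forall i j, i < n -> j < n -> R (f i) (f j) -> i = j.

Definition dark (R : nat -> nat -> Prop) : Prop :=
  ~ creduces R Id /\ ~ creduces Id R.

Definition minimal (R : nat -> nat -> Prop) : Prop :=
  inf_classes R /\
  forall S, equiv_rel S -> creduces S R ->
    cequiv S R \/ exists n, 1 <= n /\ cequiv S (Idn n).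

(* Let Q <=_c R via f.  The preimage of E under f reduces to E, so by minimality of E
   it is computably equivalent either to some Id_n or to E.

   In the first case Q is coarser than the kernel of a computable map with finitely many
   values, hence Q is computably equivalent to Id_K, K being its number of classes.

   In the second case E reduces to its preimage via some g, so h := f o g is a
   self-reduction of E.  Such an h meets every E-class: otherwise the h-orbit of a missed
   point would be a computable sequence of pairwise E-inequivalent numbers, giving
   Id <=_c E against darkness.  Since E is c.e., a computable r with x E h (r x) is found
   by dovetailed search, and then g o r reduces R to Q because E is contained in R.
   The search needs step-bounded evaluation, which is internalised by compiling every code
   into a "clocked" code taking the fuel as an extra argument. *)

From Stdlib Require Import List Arith Lia Classical IndefiniteDescription.
Import ListNotations.

(** * Basic codes *)

Lemma eval_eq_out c u y y' : eval c u y -> y = y' -> eval c u y'.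
Proof. now intros H ->. Qed.

Lemma eval_comp1 c a u x y : eval a u x -> eval c [x] y -> eval (CComp c [a]) u y.
Proof. intros Ha Hc. econstructor; [|exact Hc]. repeat constructor; auto. Qed.

Lemma eval_comp2 c a b u x x' y :
  eval a u x -> eval b u x' -> eval c [x; x'] y -> eval (CComp c [a; b]) u y.
Proof. intros Ha Hb Hc. econstructor; [|exact Hc]. repeat constructor; auto. Qed.

Lemma eval_comp3 c a b d u x x' x'' y :
  eval a u x -> eval b u x' -> eval d u x'' -> eval c [x; x'; x''] y ->
  eval (CComp c [a; b; d]) u y.
Proof. intros Ha Hb Hd Hc. econstructor; [|exact Hc]. repeat constructor; auto. Qed.

Lemma eval_comp1_inv c a u y : eval (CComp c [a]) u y -> exists x, eval a u x /\ eval c [x] y.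
Proof.
  intros H. inversion H as [| | |? ? ? ws ? Hws Hc| | |]; subst.
  inversion Hws as [|? ? ? x ? Ha Hnil]; subst. inversion Hnil; subst. eauto.
Qed.

Lemma eval_comp2_inv c a b u y :
  eval (CComp c [a; b]) u y -> exists x x', eval a u x /\ eval b u x' /\ eval c [x; x'] y.
Proof.
  intros H. inversion H as [| | |? ? ? ws ? Hws Hc| | |]; subst.
  inversion Hws as [|? ? ? x ? Ha Hws']; subst.
  inversion Hws' as [|? ? ? x' ? Hb Hnil]; subst. inversion Hnil; subst. eauto.
Qed.

Lemma eval_proj i u : eval (CProj i) u (nth i u 0).
Proof. constructor. Qed.

Fixpoint cconst n := match n with 0 => CZero | S n => CComp CSucc [cconst n] end.

Lemma eval_cconst n u : eval (cconst n) u n.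
Proof.
  induction n; simpl; [constructor|].
  eapply eval_comp1; [exact IHn | constructor].
Qed.

Definition cadd := CPrim (CProj 0) (CComp CSucc [CProj 1]).

Lemma eval_cadd x y : eval cadd [x; y] (x + y).
Proof.
  induction x; [apply ev_prim0, eval_proj|].
  eapply ev_primS; [exact IHx|]. eapply eval_comp1; [apply eval_proj | constructor].
Qed.

Definition cmul := CPrim CZero (CComp cadd [CProj 1; CProj 2]).

Lemma eval_cmul x y : eval cmul [x; y] (x * y).
Proof.
  induction x; [apply ev_prim0; constructor|].
  eapply ev_primS; [exact IHx|].
  eapply eval_comp2; [apply eval_proj | apply eval_proj |].
  eapply eval_eq_out; [apply eval_cadd | simpl; lia].
Qed.

Definition cpred := CPrim CZero (CProj 0).

Lemma eval_cpred x : eval cpred [x] (pred x).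
Proof.
  induction x; [apply ev_prim0; constructor|].
  eapply ev_primS; [exact IHx | apply eval_proj].
Qed.

Definition csubr := CPrim (CProj 0) (CComp cpred [CProj 1]).

Lemma eval_csubr x y : eval csubr [x; y] (y - x).
Proof.
  induction x.
  - eapply eval_eq_out; [apply ev_prim0, eval_proj | simpl; lia].
  - eapply ev_primS; [exact IHx|]. eapply eval_comp1; [apply eval_proj|].
    eapply eval_eq_out; [apply eval_cpred | simpl; lia].
Qed.

Definition sg x := match x with 0 => 0 | _ => 1 end.

Definition csg := CPrim CZero (cconst 1).

Lemma eval_csg x : eval csg [x] (sg x).
Proof.
  induction x; [apply ev_prim0; constructor|].
  eapply ev_primS; [exact IHx | apply eval_cconst].
Qed.

Definition cnsg := CPrim (cconst 1) CZero.

Lemma eval_cnsg x : eval cnsg [x] (1 - sg x).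
Proof.
  induction x; [apply ev_prim0, eval_cconst|].
  eapply ev_primS; [exact IHx | constructor].
Qed.

Definition cifz t a b :=
  CComp cadd [CComp cmul [CComp cnsg [t]; a]; CComp cmul [CComp csg [t]; b]].

Lemma eval_cifz t a b u x ya yb :
  eval t u x -> eval a u ya -> eval b u yb ->
  eval (cifz t a b) u (match x with 0 => ya | _ => yb end).
Proof.
  intros Ht Ha Hb. eapply eval_eq_out.
  - eapply eval_comp2; [| | apply eval_cadd].
    + eapply eval_comp2; [eapply eval_comp1; [exact Ht | apply eval_cnsg] | exact Ha |].
      apply eval_cmul.
    + eapply eval_comp2; [eapply eval_comp1; [exact Ht | apply eval_csg] | exact Hb |].
      apply eval_cmul.
  - destruct x; simpl; lia.
Qed.

Definition cifeq e n a b :=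
  cifz (CComp cadd [CComp csubr [cconst n; e]; CComp csubr [e; cconst n]]) a b.

Lemma eval_cifeq e n a b u x ya yb :
  eval e u x -> eval a u ya -> eval b u yb ->
  eval (cifeq e n a b) u (if Nat.eqb x n then ya else yb).
Proof.
  intros He Ha Hb. eapply eval_eq_out; [apply eval_cifz; [|exact Ha|exact Hb]|].
  - eapply eval_comp2; [| | apply eval_cadd];
      (eapply eval_comp2; [| | apply eval_csubr]); eauto using eval_cconst.
  - destruct (Nat.eqb_spec x n) as [->|Hne]; [now rewrite Nat.sub_diag|].
    now destruct (x - n + (n - x)) eqn:?; [lia|].
Qed.

(** * Closure properties of computable functions *)

Lemma computable_comp f g : computable f -> computable g -> computable (fun x => f (g x)).
Proof. intros [cf Hf] [cg Hg]. exists (CComp cf [cg]). intros x. eapply eval_comp1; eauto. Qed.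

Lemma computable_const n : computable (fun _ => n).
Proof. exists (cconst n). intros; apply eval_cconst. Qed.

Lemma computable_id : computable (fun x => x).
Proof. exists (CProj 0). intros; apply eval_proj. Qed.

Lemma computable_ifeq h a b n : computable h -> computable a -> computable b ->
  computable (fun x => if Nat.eqb (h x) n then a x else b x).
Proof.
  intros [ch Hh] [ca Ha] [cb Hb]. exists (cifeq ch n ca cb). intros x. now apply eval_cifeq.
Qed.

Lemma computable_iter h a : computable h -> computable (fun i => Nat.iter i h a).
Proof.
  intros [ch Hh]. exists (CPrim (cconst a) (CComp ch [CProj 1])).
  induction x; [apply ev_prim0, eval_cconst|].
  eapply ev_primS; [exact IHx|]. eapply eval_comp1; [apply eval_proj | apply Hh].
Qed.

Lemma mod_succ j K : K <> 0 ->
  S j mod K = match K - S (j mod K) with 0 => 0 | _ => S (j mod K) end.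
Proof.
  intros HK. pose proof (Nat.div_mod j K HK). pose proof (Nat.mod_upper_bound j K HK).
  symmetry. destruct (K - S (j mod K)) eqn:E.
  - apply (Nat.mod_unique _ _ (S (j / K))); [lia | rewrite Nat.mul_succ_r; lia].
  - apply (Nat.mod_unique _ _ (j / K)); lia.
Qed.

Lemma computable_mod K : K <> 0 -> computable (fun x => x mod K).
Proof.
  intros HK. exists (CPrim CZero
    (cifz (CComp csubr [CComp CSucc [CProj 1]; cconst K]) CZero (CComp CSucc [CProj 1]))).
  induction x; [rewrite Nat.Div0.mod_0_l; apply ev_prim0; constructor|].
  eapply ev_primS; [exact IHx|]. rewrite (mod_succ x K HK).
  apply eval_cifz; [| constructor | eapply eval_comp1; [apply eval_proj | constructor]].
  eapply eval_comp2; [eapply eval_comp1; [apply eval_proj | constructor] | apply eval_cconst |].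
  apply eval_csubr.
Qed.

Lemma computable_finite_choice n (P : nat -> nat -> Prop) :
  (forall v, v < n -> exists w, P v w) ->
  exists t, computable t /\ forall v, v < n -> P v (t v).
Proof.
  induction n as [|n IH]; intros HP.
  - exists (fun _ => 0). split; [apply computable_const | lia].
  - destruct IH as [t [Ct Ht]]; [intros v Hv; apply HP; lia|].
    destruct (HP n) as [w Hw]; [lia|].
    exists (fun v => if Nat.eqb v n then w else t v). split.
    + apply computable_ifeq; auto using computable_id, computable_const.
    + intros v Hv. destruct (Nat.eqb_spec v n) as [->|]; [exact Hw | apply Ht; lia].
Qed.

(** * Step-bounded evaluation *)

Fixpoint code_nested_ind (P : code -> Prop)
  (H0 : P CZero) (H1 : P CSucc) (H2 : forall i, P (CProj i))
  (H3 : forall f gs, P f -> Forall P gs -> P (CComp f gs))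
  (H4 : forall f g, P f -> P g -> P (CPrim f g))
  (H5 : forall f, P f -> P (CMu f)) (c : code) : P c :=
  let IH := code_nested_ind P H0 H1 H2 H3 H4 H5 in
  match c with
  | CZero => H0
  | CSucc => H1
  | CProj i => H2 i
  | CComp f gs => H3 f gs (IH f)
      ((fix go l : Forall P l :=
          match l with [] => Forall_nil _ | g :: l' => Forall_cons _ (IH g) (go l') end) gs)
  | CPrim f g => H4 f g (IH f) (IH g)
  | CMu f => H5 f (IH f)
  end.

Fixpoint all_some (l : list (option nat)) : option (list nat) :=
  match l with
  | [] => Some []
  | o :: l' =>
      match o, all_some l' with Some w, Some ws => Some (w :: ws) | _, _ => None end
  end.

Fixpoint prim_iter (b : option nat) (st : nat -> nat -> option nat) (n : nat) : option nat :=
  match n with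
  | 0 => b
  | S n' => match prim_iter b st n' with Some z => st n' z | None => None end
  end.

(* State of the search for the least zero of [F] after testing [0, ..., j-1]:
   [0] while every tested value is [Some (S _)], [1] once some test diverged,
   [S (S m)] once the least zero [m] has been found. *)
Fixpoint mu_state (F : nat -> option nat) (j : nat) : nat :=
  match j with
  | 0 => 0
  | S j' =>
      match mu_state F j' with
      | 0 => match F j' with None => 1 | Some 0 => S (S j') | Some (S _) => 0 end
      | a => a
      end
  end.

(* Evaluation in which every unbounded search only inspects candidates below [s]. *)
Fixpoint eval_fuel (s : nat) (c : code) (v : list nat) {struct c} : option nat :=
  match c with
  | CZero => Some 0
  | CSucc => Some (S (hd 0 v))
  | CProj i => Some (nth i v 0)
  | CComp f gs =>
      match all_some (map (fun g => eval_fuel s g v) gs) with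
      | Some ws => eval_fuel s f ws
      | None => None
      end
  | CPrim f g =>
      match v with
      | [] => None
      | n :: v' => prim_iter (eval_fuel s f v') (fun k z => eval_fuel s g (k :: z :: v')) n
      end
  | CMu f =>
      match mu_state (fun m => eval_fuel s f (m :: v)) s with
      | S (S m) => Some m
      | _ => None
      end
  end.

Lemma mu_state_searching F j :
  (forall m, m < j -> exists k, F m = Some (S k)) -> mu_state F j = 0.
Proof.
  induction j; intros H; simpl; [reflexivity|].
  rewrite IHj by (intros; apply H; lia).
  destruct (H j) as [k ->]; [lia | reflexivity].
Qed.

Lemma mu_state_found F j m : m < j -> F m = Some 0 ->
  (forall m', m' < m -> exists k, F m' = Some (S k)) -> mu_state F j = S (S m).
Proof.
  induction j; intros Hm Fm H; [lia|]. simpl.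
  destruct (Nat.eq_dec m j) as [->|].
  - now rewrite mu_state_searching, Fm.
  - now rewrite IHj by (auto; lia).
Qed.

Lemma mu_state_searching_inv F j : mu_state F j = 0 ->
  forall m, m < j -> exists k, F m = Some (S k).
Proof.
  induction j; simpl; intros E m Hm; [lia|].
  destruct (mu_state F j) eqn:E'; [|discriminate].
  destruct (F j) as [[|k]|] eqn:Fj; try discriminate.
  destruct (Nat.eq_dec m j) as [->|]; [eauto | apply IHj; auto; lia].
Qed.

Lemma mu_state_found_inv F j m : mu_state F j = S (S m) ->
  m < j /\ F m = Some 0 /\ forall m', m' < m -> exists k, F m' = Some (S k).
Proof.
  induction j; simpl; intros H; [discriminate|].
  destruct (mu_state F j) eqn:E.
  - destruct (F j) as [[|k]|] eqn:Fj; try discriminate. injection H as <-.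
    repeat split; auto. now apply mu_state_searching_inv.
  - destruct (IHj H) as [A B]. split; [lia | exact B].
Qed.

Lemma all_some_map_mono (A : Type) (l : list A) (F G : A -> option nat) ws :
  (forall a y, In a l -> F a = Some y -> G a = Some y) ->
  all_some (map F l) = Some ws -> all_some (map G l) = Some ws.
Proof.
  revert ws. induction l as [|a l IH]; simpl; intros ws H E; [exact E|].
  destruct (F a) eqn:Fa; [|discriminate].
  destruct (all_some (map F l)) eqn:E2; [|discriminate].
  rewrite (H a n (or_introl eq_refl) Fa), (IH l0); auto.
Qed.

Lemma prim_iter_mono b b' st st' n y :
  (forall z, b = Some z -> b' = Some z) ->
  (forall k z w, st k z = Some w -> st' k z = Some w) ->
  prim_iter b st n = Some y -> prim_iter b' st' n = Some y.
Proof.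
  revert y; induction n; simpl; intros y Hb Hst E; [auto|].
  destruct (prim_iter b st n) eqn:E2; [|discriminate].
  rewrite (IHn n0); auto.
Qed.

Lemma eval_fuel_mono c : forall s s' v y, s <= s' ->
  eval_fuel s c v = Some y -> eval_fuel s' c v = Some y.
Proof.
  induction c using code_nested_ind; intros s s' v y Hs E; simpl in *; auto.
  - destruct (all_some (map (fun g => eval_fuel s g v) gs)) eqn:E2; [|discriminate].
    erewrite all_some_map_mono; [eauto | | exact E2].
    intros a y' Ha. rewrite Forall_forall in H. eauto.
  - destruct v; [discriminate|]. eapply prim_iter_mono; [| | exact E]; eauto.
  - destruct (mu_state (fun m => eval_fuel s c (m :: v)) s) as [|[|m]] eqn:E2;
      try discriminate.
    injection E as <-. apply mu_state_found_inv in E2 as [Hm [Fm Hlt]].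
    rewrite (mu_state_found _ _ m); eauto; [lia|].
    intros m' Hm'. destruct (Hlt m' Hm') as [k Hk]. eauto.
Qed.

Lemma all_some_evals gs v ws s :
  Forall (fun g => forall s v y, eval_fuel s g v = Some y -> eval g v y) gs ->
  all_some (map (fun g => eval_fuel s g v) gs) = Some ws -> evals gs v ws.
Proof.
  revert ws; induction gs as [|g gs IH]; simpl; intros ws HF E.
  - injection E as <-. constructor.
  - inversion HF; subst.
    destruct (eval_fuel s g v) eqn:E1; [|discriminate].
    destruct (all_some (map (fun g => eval_fuel s g v) gs)) eqn:E2; [|discriminate].
    injection E as <-. constructor; eauto.
Qed.

Lemma eval_fuel_sound c : forall s v y, eval_fuel s c v = Some y -> eval c v y.
Proof.
  induction c using code_nested_ind; intros s v y E; simpl in *;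
    try (injection E as <-; constructor).
  - destruct (all_some (map (fun g => eval_fuel s g v) gs)) eqn:E2; [|discriminate].
    econstructor; [eapply all_some_evals|]; eauto.
  - destruct v as [|n v]; [discriminate|]. revert y E.
    induction n; simpl; intros y E; [constructor; eauto|].
    destruct (prim_iter (eval_fuel s c1 v) (fun k z => eval_fuel s c2 (k :: z :: v)) n)
      eqn:E2; [|discriminate].
    econstructor; eauto.
  - destruct (mu_state (fun m => eval_fuel s c (m :: v)) s) as [|[|m]] eqn:E2;
      try discriminate.
    injection E as <-. apply mu_state_found_inv in E2 as [_ [Fm Hlt]].
    constructor; [eauto|]. intros m' Hm'. destruct (Hlt m' Hm') as [k Hk]. eauto.
Qed.

Definition fuel_complete (c : code) : Prop :=
  forall v y, eval c v y -> exists s, eval_fuel s c v = Some y.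

Lemma evals_fuel_complete gs v ws : Forall fuel_complete gs -> evals gs v ws ->
  exists s, all_some (map (fun g => eval_fuel s g v) gs) = Some ws.
Proof.
  intros HF Hev. induction Hev as [|g gs v w ws Hg Hgs IH]; [now exists 0|].
  inversion HF as [|? ? Cg Cgs]; subst.
  destruct (IH Cgs) as [s1 Hs1], (Cg _ _ Hg) as [s2 Hs2].
  exists (max s1 s2). simpl.
  rewrite (eval_fuel_mono _ s2 (max s1 s2) _ _ ltac:(lia) Hs2).
  erewrite all_some_map_mono; [reflexivity | | exact Hs1].
  intros a y _. apply eval_fuel_mono. lia.
Qed.

Lemma mu_fuel_complete c v n : fuel_complete c ->
  (forall m, m < n -> exists k, eval c (m :: v) (S k)) ->
  exists s, forall s' m, s <= s' -> m < n -> exists k, eval_fuel s' c (m :: v) = Some (S k).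
Proof.
  intros Cc. induction n as [|n IH]; intros Hlt; [exists 0; lia|].
  destruct IH as [s1 Hs1]; [intros; apply Hlt; lia|].
  destruct (Hlt n) as [k Hk]; [lia|]. destruct (Cc _ _ Hk) as [s2 Hs2].
  exists (max s1 s2). intros s' m Hs' Hm. destruct (Nat.eq_dec m n) as [->|].
  - exists k. eapply eval_fuel_mono; [|exact Hs2]. lia.
  - apply Hs1; lia.
Qed.

Lemma prim_fuel_complete f g :
  fuel_complete f -> fuel_complete g -> fuel_complete (CPrim f g).
Proof.
  intros Cf Cg [|n v] y E; [inversion E|]. revert y E.
  induction n as [|n IH]; intros y E.
  - inversion E as [| | | |? ? ? ? Hf| |]; subst. destruct (Cf _ _ Hf) as [s Hs]. now exists s.
  - inversion E as [| | | | |? ? ? ? z ? Hz Hg|]; subst.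
    destruct (IH _ Hz) as [s1 Hs1], (Cg _ _ Hg) as [s2 Hs2]. exists (max s1 s2).
    apply (eval_fuel_mono _ s1 (max s1 s2)) in Hs1; [|lia]. simpl in *. rewrite Hs1.
    eapply eval_fuel_mono; [|exact Hs2]. lia.
Qed.

Lemma eval_fuel_complete c : fuel_complete c.
Proof.
  induction c using code_nested_ind; [| | | | now apply prim_fuel_complete |];
    intros v y E; inversion E as [| | |? ? ? ws ? Hgs Hf| | |? ? ? Hy Hlt]; subst;
    try (now exists 0).
  - destruct (evals_fuel_complete _ _ _ H Hgs) as [s1 Hs1], (IHc _ _ Hf) as [s2 Hs2].
    exists (max s1 s2). simpl. erewrite all_some_map_mono; [| | exact Hs1].
    + eapply eval_fuel_mono; [|exact Hs2]. lia.
    + intros a y' _. apply eval_fuel_mono. lia.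
  - destruct (IHc _ _ Hy) as [s0 Hs0], (mu_fuel_complete _ _ _ IHc Hlt) as [s1 Hs1].
    exists (max (max s0 s1) (S y)). simpl.
    rewrite (mu_state_found _ _ y); [reflexivity | lia | |].
    + eapply eval_fuel_mono; [|exact Hs0]. lia.
    + intros m Hm. apply Hs1; lia.
Qed.

Lemma eval_det c v y y' : eval c v y -> eval c v y' -> y = y'.
Proof.
  intros H H'. destruct (eval_fuel_complete _ _ _ H) as [s Hs].
  destruct (eval_fuel_complete _ _ _ H') as [s' Hs'].
  apply (eval_fuel_mono _ s (max s s')) in Hs; [|lia].
  apply (eval_fuel_mono _ s' (max s s')) in Hs'; [|lia].
  congruence.
Qed.

(** * Clocked codes *)

Definition enc_opt (o : option nat) : nat := match o with None => 0 | Some y => S y end.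

Fixpoint projs d k := match k with 0 => [] | S k => CProj d :: projs (S d) k end.

Lemma evals_projs w : forall pre, evals (projs (length pre) (length w)) (pre ++ w) w.
Proof.
  induction w as [|a w IH]; intros pre; simpl; constructor.
  - eapply eval_eq_out; [apply eval_proj | now rewrite nth_middle].
  - replace (pre ++ a :: w) with ((pre ++ [a]) ++ w) by now rewrite <- app_assoc.
    replace (S (length pre)) with (length (pre ++ [a])) by (rewrite length_app; simpl; lia).
    apply IH.
Qed.

Fixpoint all_pos_code (bs : list code) : code :=
  match bs with
  | [] => cconst 1
  | b :: bs => CComp cmul [CComp csg [b]; all_pos_code bs]
  end.

Definition all_pos (l : list nat) : nat := fold_right (fun x acc => sg x * acc) 1 l.

Lemma eval_all_pos_code bs u ys : evals bs u ys -> eval (all_pos_code bs) u (all_pos ys).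
Proof.
  induction 1; simpl; [exact (eval_cconst 1 _)|].
  eapply eval_comp2; [eapply eval_comp1; [eassumption | apply eval_csg] | eassumption |].
  apply eval_cmul.
Qed.

Lemma evals_map_pred bs u ys :
  evals bs u ys -> evals (map (fun b => CComp cpred [b]) bs) u (map pred ys).
Proof.
  induction 1; simpl; constructor; auto. eapply eval_comp1; [eassumption | apply eval_cpred].
Qed.

Lemma all_some_enc l : match all_some l with
  | Some ws => ws = map (fun o => pred (enc_opt o)) l /\ all_pos (map enc_opt l) = 1
  | None => all_pos (map enc_opt l) = 0
  end.
Proof.
  induction l as [|[a|] l IH]; simpl; auto.
  destruct (all_some l) as [ws|]; simpl.
  - destruct IH as [-> ->]. auto.
  - rewrite IH. simpl. lia.
Qed.

(* The steps of the two recursions below run on [enc_opt] values, [0] marking divergence. *)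
Definition clocked_prim_step (cg : code) (k : nat) : code :=
  CComp cmul [CComp csg [CProj 1];
              CComp cg (CProj 2 :: CProj 0 :: CComp cpred [CProj 1] :: projs 3 k)].

Definition clocked_mu_step (cf : code) (k : nat) : code :=
  let b := CComp cf (CProj 2 :: CProj 0 :: projs 3 k) in
  cifz (CProj 1)
    (cifz b (cconst 1) (cifz (CComp cpred [b]) (CComp CSucc [CComp CSucc [CProj 0]]) CZero))
    (CProj 1).

Fixpoint clocked (c : code) (k : nat) {struct c} : code :=
  match c with
  | CZero => cconst 1
  | CSucc => CComp CSucc [CComp CSucc [CProj 1]]
  | CProj i => CComp CSucc [CProj (S i)]
  | CComp f gs =>
      CComp cmul [all_pos_code (map (fun g => clocked g k) gs);
                  CComp (clocked f (length gs))
                    (CProj 0 :: map (fun b => CComp cpred [b]) (map (fun g => clocked g k) gs))]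
  | CPrim f g =>
      match k with
      | 0 => CZero
      | S k' => CComp (CPrim (clocked f k') (clocked_prim_step (clocked g (S (S k'))) k'))
                      (CProj 1 :: CProj 0 :: projs 2 k')
      end
  | CMu f =>
      CComp cpred [CComp (CPrim CZero (clocked_mu_step (clocked f (S k)) k))
                         (CProj 0 :: CProj 0 :: projs 1 k)]
  end.

Definition clocked_correct (c : code) : Prop :=
  forall k s v, length v = k -> eval (clocked c k) (s :: v) (enc_opt (eval_fuel s c v)).

Lemma clocked_comp_correct f gs :
  clocked_correct f -> Forall clocked_correct gs -> clocked_correct (CComp f gs).
Proof.
  intros Cf Cgs k s v Hk. simpl.
  set (os := map (fun g => eval_fuel s g v) gs).
  assert (Hgs : evals (map (fun g => clocked g k) gs) (s :: v) (map enc_opt os)).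
  { subst os. induction Cgs; simpl; constructor; auto. }
  eapply eval_comp2; [exact (eval_all_pos_code _ _ _ Hgs) | |].
  - econstructor; [constructor; [apply eval_proj | exact (evals_map_pred _ _ _ Hgs)]|].
    apply Cf. unfold os. now rewrite !length_map.
  - pose proof (all_some_enc os) as Hos. fold os. destruct (all_some os) as [ws|].
    + destruct Hos as [Hws ->]. rewrite map_map, <- Hws.
      eapply eval_eq_out; [apply eval_cmul | simpl; lia].
    + rewrite Hos. apply eval_cmul.
Qed.

Lemma clocked_prim_correct f g :
  clocked_correct f -> clocked_correct g -> clocked_correct (CPrim f g).
Proof.
  intros Cf Cg [|k] s [|n v] Hk; try discriminate; simpl; [constructor|].
  injection Hk as Hk. subst k.
  econstructor; [constructor; [apply eval_proj | constructor; [apply eval_proj|]]|].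
  { apply (evals_projs v [s; n]). }
  simpl. induction n as [|n IH]; [now apply ev_prim0, Cf|].
  eapply ev_primS; [exact IH|]. simpl.
  eapply eval_comp2; [eapply eval_comp1; [apply eval_proj | apply eval_csg] | |].
  - eapply ev_comp.
    + do 3 (constructor; [try (eapply eval_comp1; [apply eval_proj | apply eval_cpred]);
                          apply eval_proj|]).
      apply (evals_projs v [n; _; s]).
    + apply Cg. reflexivity.
  - destruct (prim_iter _ _ n); simpl; [|apply eval_cmul].
    eapply eval_eq_out; [apply eval_cmul | lia].
Qed.

Lemma clocked_mu_correct f : clocked_correct f -> clocked_correct (CMu f).
Proof.
  intros Cf k s v Hk. simpl. set (F := fun m => eval_fuel s f (m :: v)).
  assert (Hstate : forall j,
    eval (CPrim CZero (clocked_mu_step (clocked f (S k)) k)) (j :: s :: v) (mu_state F j)).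
  { induction j as [|j IH]; [apply ev_prim0; constructor|].
    eapply ev_primS; [exact IH|].
    assert (Hb : eval (CComp (clocked f (S k)) (CProj 2 :: CProj 0 :: projs 3 k))
                      (j :: mu_state F j :: s :: v) (enc_opt (F j))).
    { eapply ev_comp.
      - do 2 (constructor; [apply eval_proj|]). rewrite <- Hk. apply (evals_projs v [j; _; s]).
      - apply Cf. simpl. lia. }
    eapply eval_eq_out.
    - apply eval_cifz; [apply eval_proj | | apply eval_proj].
      apply eval_cifz; [exact Hb | apply eval_cconst |].
      apply eval_cifz; [eapply eval_comp1; [exact Hb | apply eval_cpred] | | constructor].
      eapply eval_comp1; [eapply eval_comp1; [apply eval_proj | constructor] | constructor].
    - simpl. destruct (mu_state F j); [|reflexivity]. now destruct (F j) as [[|]|]. }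
  eapply eval_comp1.
  - eapply ev_comp; [|apply Hstate].
    do 2 (constructor; [apply eval_proj|]). rewrite <- Hk. apply (evals_projs v [s]).
  - eapply eval_eq_out; [apply eval_cpred|]. simpl. now destruct (mu_state F s) as [|[|m]].
Qed.

Lemma clocked_spec c : clocked_correct c.
Proof.
  induction c using code_nested_ind.
  - intros k s v _. apply eval_cconst.
  - intros k s v _. eapply eval_comp1; [eapply eval_comp1; [apply eval_proj | constructor]|].
    destruct v; constructor.
  - intros k s v _. eapply eval_comp1; [apply eval_proj | constructor].
  - now apply clocked_comp_correct.
  - now apply clocked_prim_correct.
  - now apply clocked_mu_correct.
Qed.

(** * C.e. relations *)

Lemma eval_mu_least cd v p : (forall m, eval cd (m :: v) (p m)) -> (exists m, p m = 0) ->
  exists n, eval (CMu cd) v n /\ p n = 0.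
Proof.
  intros Hcd Hex.
  destruct (dec_inh_nat_subset_has_unique_least_element (fun m => p m = 0)
              (fun m => classic (p m = 0)) Hex) as [n [[Hn Hleast] _]].
  exists n. split; [|exact Hn]. constructor; [rewrite <- Hn; apply Hcd|].
  intros m Hm. exists (pred (p m)). specialize (Hcd m).
  destruct (p m) eqn:Hpm; [specialize (Hleast m Hpm); lia | exact Hcd].
Qed.

Fixpoint psum (p : nat -> nat) (n : nat) : nat :=
  match n with 0 => 0 | S n => psum p n + p n end.

Lemma psum_pos p n : 0 < psum p n <-> exists y, y < n /\ 0 < p y.
Proof.
  induction n as [|n IH]; simpl; [split; [lia | intros [y [Hy _]]; lia]|].
  split.
  - intros H. destruct (p n) eqn:Hpn.
    + destruct (proj1 IH) as [y [Hy Hpy]]; [lia | exists y; split; [lia | exact Hpy]].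
    + exists n. split; lia.
  - intros [y [Hy Hpy]]. destruct (Nat.eq_dec y n) as [->|]; [lia|].
    enough (0 < psum p n) by lia. apply IH. exists y. split; [lia | exact Hpy].
Qed.

Definition cpsum (cq : code) (k : nat) : code :=
  CPrim CZero (CComp cadd [CProj 1; CComp cq (CProj 0 :: projs 2 k)]).

Lemma eval_cpsum cq p u : (forall y, eval cq (y :: u) (p y)) ->
  forall n, eval (cpsum cq (length u)) (n :: u) (psum p n).
Proof.
  intros Hcq. induction n as [|n IH]; [apply ev_prim0; constructor|].
  eapply ev_primS; [exact IH|].
  eapply eval_comp2; [apply eval_proj | | apply eval_cadd].
  eapply ev_comp; [|apply Hcq]. constructor; [apply eval_proj | apply (evals_projs u [n; _])].
Qed.

Lemma one_minus_sg_eq_0 n : 1 - sg n = 0 <-> 0 < n.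
Proof. destruct n; simpl; lia. Qed.

Lemma ce_rel_uniformization (P : nat -> nat -> Prop) :
  ce_rel P -> (forall x, exists y, P x y) -> exists r, computable r /\ forall x, P x (r x).
Proof.
  intros [c Hc] Htotal.
  set (halts t x y := enc_opt (eval_fuel t c [x; y])).
  set (clk := CComp (clocked c 2) [CProj 1; CProj 2; CProj 0]).
  assert (Hclk : forall y t x, eval clk [y; t; x] (halts t x y)).
  { intros y t x. eapply eval_comp3; [apply eval_proj.. | now apply clocked_spec]. }
  (* First search for a fuel [t] within which some [y < t] is seen to satisfy [P x y],
     then for the least such [y]. *)
  set (fuel_test := CComp cnsg [CComp (cpsum clk 2) [CProj 0; CProj 0; CProj 1]]).
  set (witness_test := CComp cnsg [clk]).
  assert (Hsearch : forall x, exists y,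
    eval (CComp (CMu witness_test) [CMu fuel_test; CProj 0]) [x] y /\ P x y).
  { intros x.
    assert (Hfuel : forall t, eval fuel_test [t; x] (1 - sg (psum (halts t x) t))).
    { intros t. eapply eval_comp1; [|apply eval_cnsg].
      eapply eval_comp3; [apply eval_proj.. |]. apply (eval_cpsum _ _ [t; x]).
      intros y. apply Hclk. }
    destruct (eval_mu_least _ _ _ Hfuel) as [t [Ht Ht0]].
    { destruct (Htotal x) as [y0 Hy0]. apply Hc in Hy0 as [z Hz].
      destruct (eval_fuel_complete _ _ _ Hz) as [s0 Hs0].
      exists (S (max s0 y0)). apply one_minus_sg_eq_0, psum_pos. exists y0. split; [lia|].
      unfold halts. rewrite (eval_fuel_mono _ s0 (S (max s0 y0)) _ _ ltac:(lia) Hs0). simpl. lia. }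
    assert (Hwit : forall y, eval witness_test [y; t; x] (1 - sg (halts t x y))).
    { intros y. eapply eval_comp1; [apply Hclk | apply eval_cnsg]. }
    destruct (eval_mu_least _ _ _ Hwit) as [y [Hy Hy0]].
    { apply one_minus_sg_eq_0, psum_pos in Ht0 as [y [_ Hy]].
      exists y. now apply one_minus_sg_eq_0. }
    exists y. split; [eapply eval_comp2; [exact Ht | apply eval_proj | exact Hy]|].
    apply one_minus_sg_eq_0 in Hy0. unfold halts in Hy0.
    destruct (eval_fuel t c [x; y]) as [z|] eqn:E; simpl in Hy0; [|lia].
    apply Hc. exists z. now apply (eval_fuel_sound _ t). }
  destruct (functional_choice _ Hsearch) as [r Hr]. exists r. split.
  - exists (CComp (CMu witness_test) [CMu fuel_test; CProj 0]). intros x. apply Hr.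
  - intros x. apply Hr.
Qed.

Lemma ce_rel_comp_r P h : ce_rel P -> computable h -> ce_rel (fun x y => P x (h y)).
Proof.
  intros [c Hc] [ch Hh]. exists (CComp c [CProj 0; CComp ch [CProj 1]]). intros x y.
  rewrite Hc. split; intros [z Hz]; exists z.
  - eapply eval_comp2; [apply eval_proj | eapply eval_comp1; [apply eval_proj | apply Hh] |].
    exact Hz.
  - apply eval_comp2_inv in Hz as [x0 [w [Hx0 [Hw Hz]]]].
    apply eval_comp1_inv in Hw as [y0 [Hy0 Hw]].
    inversion Hx0; inversion Hy0; subst. simpl in Hz.
    now rewrite (eval_det _ _ _ _ Hw (Hh y)) in Hz.
Qed.

(** * Equivalence relations with finitely many computable classes *)

Section FiniteKernel.

Variables (Q : nat -> nat -> Prop) (H : nat -> nat) (n : nat).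
Hypothesis Q_equiv : equiv_rel Q.
Hypothesis H_computable : computable H.
Hypothesis H_bounded : forall x, H x < n.
Hypothesis H_kernel_sub : forall x y, H x = H y -> Q x y.

Lemma kernel_representatives : forall m, exists K (rep : nat -> nat),
  (forall i j, i < K -> j < K -> Q (rep i) (rep j) -> i = j) /\
  (forall x, H x < m -> exists i, i < K /\ Q x (rep i)).
Proof.
  destruct Q_equiv as [Qrefl [Qsym Qtrans]].
  induction m as [|m [K [rep [Hsep Hcov]]]]; [exists 0, (fun _ => 0); split; lia|].
  destruct (classic (exists x0, H x0 = m /\ forall i, i < K -> ~ Q x0 (rep i)))
    as [[x0 [Hx0 Hnew]] | Hold].
  - exists (S K), (fun i => if Nat.eqb i K then x0 else rep i). split.
    + intros i j Hi Hj.
      destruct (Nat.eqb_spec i K), (Nat.eqb_spec j K); intros Qij; try lia.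
      * exfalso. apply (Hnew j); [lia | assumption].
      * exfalso. apply (Hnew i); [lia | now apply Qsym].
      * apply Hsep; [lia | lia | assumption].
    + intros x Hx. destruct (Nat.eq_dec (H x) m) as [Hxm|].
      * exists K. rewrite Nat.eqb_refl. split; [lia | apply H_kernel_sub; congruence].
      * destruct (Hcov x) as [i [Hi Qxi]]; [lia|].
        exists i. destruct (Nat.eqb_spec i K); [lia | split; [lia | exact Qxi]].
  - exists K, rep. split; [exact Hsep|]. intros x Hx.
    destruct (Nat.eq_dec (H x) m) as [Hxm|]; [|apply Hcov; lia].
    apply NNPP. intros Hno. apply Hold. exists x. split; [exact Hxm|].
    intros i Hi Qxi. apply Hno. eauto.
Qed.

Variables (K : nat) (rep : nat -> nat).
Hypothesis rep_sep : forall i j, i < K -> j < K -> Q (rep i) (rep j) -> i = j.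
Hypothesis rep_cover : forall x, exists i, i < K /\ Q x (rep i).

Lemma Idn_creduces_representatives : 1 <= K -> creduces (Idn K) Q.
Proof.
  intros HK. destruct Q_equiv as [Qrefl _].
  destruct (computable_finite_choice K (fun i w => w = rep i)) as [t [Ct Ht]]; [eauto|].
  exists (fun i => t (i mod K)). split.
  { apply computable_comp; [exact Ct | apply computable_mod; lia]. }
  intros i j. unfold Idn.
  pose proof (Nat.mod_upper_bound i K). pose proof (Nat.mod_upper_bound j K).
  rewrite !Ht by lia. split; [now intros -> | apply rep_sep; lia].
Qed.

Lemma creduces_Idn_representatives : 1 <= K -> creduces Q (Idn K).
Proof.
  intros HK. destruct Q_equiv as [Qrefl [Qsym Qtrans]].
  destruct (computable_finite_choice n
              (fun v w => w < K /\ forall x, H x = v -> Q x (rep w))) as [t [Ct Ht]].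
  { intros v _. destruct (classic (exists x, H x = v)) as [[x Hx] | Hno].
    - destruct (rep_cover x) as [i [Hi Qxi]]. exists i. split; [exact Hi|].
      intros x' Hx'. apply Qtrans with x; [apply H_kernel_sub; congruence | exact Qxi].
    - exists 0. split; [exact HK | intros x Hx; exfalso; eauto]. }
  exists (fun x => t (H x)). split; [now apply computable_comp|].
  intros x y. unfold Idn.
  destruct (Ht (H x)) as [Hx Qx], (Ht (H y)) as [Hy Qy]; auto.
  specialize (Qx x eq_refl). specialize (Qy y eq_refl).
  rewrite !Nat.mod_small by assumption. split.
  - intros Qxy. apply rep_sep; eauto.
  - intros Exy. apply Qtrans with (rep (t (H x))); [exact Qx|]. rewrite Exy. auto.
Qed.

End FiniteKernel.

Lemma cequiv_Idn_of_finite_kernel Q H n :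
  equiv_rel Q -> computable H -> (forall x, H x < n) -> (forall x y, H x = H y -> Q x y) ->
  exists K, 1 <= K /\ cequiv Q (Idn K).
Proof.
  intros HQ CH Hbd Hker.
  destruct (kernel_representatives Q H HQ Hker n) as [K [rep [Hsep Hcov]]].
  assert (Hcov' : forall x, exists i, i < K /\ Q x (rep i)) by (intros x; apply Hcov, Hbd).
  assert (HK : 1 <= K) by (destruct (Hcov' 0) as [i [Hi _]]; lia).
  exists K. split; [exact HK|]. split.
  - eapply creduces_Idn_representatives; eauto.
  - eapply Idn_creduces_representatives; eauto.
Qed.

(** * Self-reductions of dark ceers *)

Lemma equiv_rel_preimage (E : nat -> nat -> Prop) f :
  equiv_rel E -> equiv_rel (fun x y => E (f x) (f y)).
Proof. intros [Erefl [Esym Etrans]]. split; [|split]; eauto. Qed.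

Lemma self_reduction_hits_every_class (E : nat -> nat -> Prop) h :
  equiv_rel E -> ~ creduces Id E -> computable h -> (forall x y, E (h x) (h y) -> E x y) ->
  forall x, exists y, E x (h y).
Proof.
  intros [Erefl [Esym _]] HnotId Ch Hinj a. apply NNPP. intros Hmiss.
  assert (Hfar : forall i d, ~ E (Nat.iter i h a) (Nat.iter (i + S d) h a)).
  { induction i as [|i IH]; intros d Hx; simpl in Hx; [now apply Hmiss; eauto|].
    apply (IH d), Hinj, Hx. }
  apply HnotId. exists (fun i => Nat.iter i h a). split; [now apply computable_iter|].
  intros i j. unfold Id. split; [now intros ->|]. intros Hij.
  destruct (lt_eq_lt_dec i j) as [[Hlt | Heq] | Hgt]; [exfalso | exact Heq | exfalso].
  - replace j with (i + S (j - i - 1)) in Hij by lia. exact (Hfar _ _ Hij).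
  - replace i with (j + S (i - j - 1)) in Hij by lia. exact (Hfar _ _ (Esym _ _ Hij)).
Qed.

Lemma creduces_back_of_self_reduction (E R Q : nat -> nat -> Prop) f g :
  ceer E -> ~ creduces Id E -> equiv_rel R -> (forall x y, E x y -> R x y) ->
  computable f -> computable g -> (forall x y, Q x y <-> R (f x) (f y)) ->
  (forall x y, E x y <-> E (f (g x)) (f (g y))) -> creduces R Q.
Proof.
  intros [HE Ece] HnotId [_ [Rsym Rtrans]] HER Cf Cg HQ Hg.
  assert (Cfg : computable (fun y => f (g y))) by now apply computable_comp.
  destruct (ce_rel_uniformization (fun x y => E x (f (g y)))) as [r [Cr Hr]].
  - now apply ce_rel_comp_r.
  - apply self_reduction_hits_every_class; auto. intros x y. apply Hg.
  - exists (fun x => g (r x)). split; [now apply computable_comp|].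
    intros x y. rewrite HQ. pose proof (HER _ _ (Hr x)). pose proof (HER _ _ (Hr y)).
    split; intros; eauto.
Qed.

Theorem proposition2 (E R : nat -> nat -> Prop) :
  ceer E -> dark E -> minimal E ->
  equiv_rel R -> inf_classes R -> (forall x y, E x y -> R x y) ->
  minimal R.
Proof.
  intros HE [_ HnotId] [_ HEmin] HR HRinf HER. split; [exact HRinf|].
  intros Q HQ [f [Cf Hf]].
  destruct (HEmin (fun x y => E (f x) (f y))) as [[_ [g [Cg Hg]]] | [n [Hn [[G [CG HG]] _]]]].
  - apply equiv_rel_preimage, HE.
  - exists f. split; [exact Cf | tauto].
  - left. split; [exists f; auto|].
    now apply (creduces_back_of_self_reduction E R Q f g).
  - right. destruct (cequiv_Idn_of_finite_kernel Q (fun x => G x mod n) n) as [K HK]; eauto.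
    + apply (computable_comp (fun x => x mod n)); [apply computable_mod; lia | exact CG].
    + intros x. apply Nat.mod_upper_bound. lia.
    + intros x y Hxy. apply Hf, HER, HG, Hxy.
Qed.
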